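(* If $G$ is a connected locally Dirac graph of order $n \ge 3$, then $\lambda(G) = \delta(G)$.
   Context: $\lambda(G)$ is the edge-connectivity (minimum number of edges whose removal disconnects $G$ or leaves the trivial graph) and $\delta(G)$ the minimum degree. A graph $G$ is locally Dirac if for every vertex $v \in V(G)$ and every $u \in N(v)$, $\deg_{\langle N(v)\rangle}(u) \ge \deg_G(v)/2$, where $N(v)$ is the open neighbourhood of $v$ and $\langle N(v)\rangle$ the subgraph induced by it. *)

From mathcomp Require Import all_boot.
Set Implicit Arguments. Unset Strict Implicit. Unset Printing Implicit Defensive.

(* A finite simple graph: vertex type T : finType, adjacency e : rel T,
   required (in the theorem) to be symmetric and irreflexive. *)
Section Graph.
Variables (T : finType) (e : rel T).

Definition nbhd (v : T) : {set T} := [set u | e v u].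
Definition deg (v : T) : nat := #|nbhd v|.

(* minimum degree delta(G) (equals 0 for the empty graph) *)
Definition min_deg : nat := \big[minn/#|T|]_(v : T) deg v.

Definition connected_graph : Prop := forall x y : T, connect e x y.

Definition edges : {set {set T}} := [set E : {set T} | [exists x, exists y, e x y && (E == [set x; y])]].

Definition del_edges (F : {set {set T}}) : rel T :=
  fun x y => e x y && ([set x; y] \notin F).

Definition disconnecting (F : {set {set T}}) : bool :=
  (F \subset edges) && ~~ [forall x, forall y, connect (del_edges F) x y].

(* edge-connectivity lambda(G): minimum size of a disconnecting edge set.
   (Default value #|edges| is only reached when no disconnecting set exists,
   i.e. for graphs with at most one vertex, irrelevant for n >= 3.) *)
Definition edge_conn : nat :=
  \big[minn/#|edges|]_(F in powerset edges | disconnecting F) #|F|.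

(* locally Dirac: for all v and u in N(v), deg_<N(v)>(u) >= deg v / 2 *)
Definition locally_dirac : Prop :=
  forall v u : T, u \in nbhd v -> deg v <= 2 * #|nbhd u :&: nbhd v|.
End Graph.

(* Deleting the edges at a vertex of minimum degree disconnects G, so
   lambda <= delta.  Conversely, a disconnecting edge set F contains all the
   edges of some cut (S, ~S) crossed by at least one edge.  Pick u with the
   largest number a(u) of neighbours across the cut; its remaining neighbours
   form I(u).
   If |I(u)| <= a(u), the local Dirac condition at u gives every x in I(u) a
   neighbour across the cut, so the edges from u across the cut together with
   one such edge per x are deg u distinct edges of F.
   Otherwise the local Dirac condition at each neighbour y of u across the cut
   yields |I(u)| + 4 <= 2 a(y) + a(u); summing over y, the edges leaving those
   neighbours across the cut already number at least deg u. *)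

From mathcomp Require Import all_boot zify.

Set Implicit Arguments. Unset Strict Implicit. Unset Printing Implicit Defensive.

Lemma geq_bigminn (I : eqType) (r : seq I) (P : pred I) (F : I -> nat) d i :
  i \in r -> P i -> \big[minn/d]_(j <- r | P j) F j <= F i.
Proof.
elim: r => // x r IH; rewrite inE big_cons => /orP[/eqP->|hi] hP.
  by rewrite hP geq_minl.
case: (P x); last exact: IH.
exact: leq_trans (geq_minr _ _) (IH hi hP).
Qed.

Lemma set2_inj_sep (T : finType) (X : {set T}) p q p' q' :
  p \in X -> p' \in X -> q \notin X -> q' \notin X ->
  [set p; q] = [set p'; q'] -> p = p' /\ q = q'.
Proof.
move=> hp hp' hq hq' E.
have : p \in [set p'; q'] by rewrite -E set21.
have : q \in [set p'; q'] by rewrite -E set22.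
rewrite !inE => /orP[/eqP qp'|/eqP ->]; first by subst; rewrite hp' in hq.
move=> /orP[/eqP -> //|/eqP pq']; by subst; rewrite hp in hq'.
Qed.

Lemma leq_add_of_sum_bound (A M p : nat) :
  0 < M -> M < A -> M * (A + 4) <= 2 * p + M * M -> p <= M * M -> M + A <= p.
Proof.
(* the slack is (M - 2) * (A - M); M = 1 is ruled out by the two bounds *)
move=> M_gt0 MA hsum hp.
have M_ge2 : 2 <= M by nia.
have : 2 * (A - M) <= M * (A - M) by rewrite leq_mul2r M_ge2 orbT.
nia.
Qed.

Lemma connect_cross (T : finType) (r : rel T) (S : {set T}) x y :
  connect r x y -> x \in S -> y \notin S -> exists a b, [&& r a b, a \in S & b \notin S].
Proof.
move=> /connectP [p]; elim: p x => [|z p IH] x /=; first by move=> _ -> ->.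
case/andP => rxz hp ylast hx hy.
case hz: (z \in S); first exact: IH hp ylast hz hy.
by exists x, z; rewrite rxz hx hz.
Qed.

Section Graph.
Variables (T : finType) (e : rel T).
Hypotheses (esym : symmetric e) (eirr : irreflexive e).

Lemma min_deg_le v : min_deg e <= deg e v.
Proof. by apply: geq_bigminn; rewrite ?mem_index_enum. Qed.

Lemma min_deg_attained : 0 < #|T| -> exists v, min_deg e = deg e v.
Proof.
case/card_gt0P => x0 _.
exists [arg min_(v < x0) deg e v]; case: arg_minnP => // v _ hv.
apply/eqP; rewrite eqn_leq min_deg_le /min_deg.
apply: (big_ind (fun n => deg e v <= n)) => //.
- exact: max_card.
- by move=> m n h1 h2; rewrite leq_min h1.
Qed.

Definition star v : {set {set T}} := [set [set v; u] | u in nbhd e v].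

Lemma card_star v : #|star v| = deg e v.
Proof.
rewrite card_in_imset // => u u' hu hu'.
have hv : v \in [set v] by rewrite inE.
have nv w : w \in nbhd e v -> w \notin [set v].
  by rewrite !inE; apply: contraL => /eqP->; rewrite eirr.
by case/(set2_inj_sep hv hv (nv _ hu) (nv _ hu')).
Qed.

Lemma star_sub_edges v : star v \subset edges e.
Proof.
apply/subsetP => _ /imsetP [u hu ->]; rewrite inE.
by apply/existsP; exists v; apply/existsP; exists u; move: hu; rewrite inE eqxx andbT.
Qed.

Lemma star_disconnecting v : 1 < #|T| -> disconnecting e (star v).
Proof.
move=> hT; rewrite /disconnecting star_sub_edges /=.
have [y] : exists y, y \in [set~ v] by apply/card_gt0P; rewrite cardsC1; lia.
rewrite !inE => yv; apply/negP => /forallP /(_ v) /forallP /(_ y).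
case/connectP => -[|z p] /=; first by move=> _ yv0; rewrite yv0 eqxx in yv.
by case/andP => /andP[evz /negP[]]; apply: imset_f; rewrite inE.
Qed.

Lemma edge_conn_le_deg v : 1 < #|T| -> edge_conn e <= deg e v.
Proof.
move=> hT; rewrite -card_star; apply: geq_bigminn; first exact: mem_index_enum.
by rewrite powersetE star_sub_edges star_disconnecting.
Qed.

Lemma leq_edge_conn n :
  n <= #|edges e| -> (forall F, disconnecting e F -> n <= #|F|) -> n <= edge_conn e.
Proof.
move=> hn hF; apply: (big_ind (fun m => n <= m)) => //.
- by move=> a b ha hb; rewrite leq_min ha.
- by move=> F /andP[_ /hF].
Qed.

Lemma disconnecting_cut F : connected_graph e -> disconnecting e F ->
  exists S : {set T}, (exists x y, [&& e x y, x \in S & y \notin S]) /\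
    (forall x y, e x y -> x \in S -> y \notin S -> [set x; y] \in F).
Proof.
move=> hcon /andP[_ /forallPn [x /forallPn [y xy_sep]]].
exists [set z | connect (del_edges e F) x z]; split.
  by apply: (connect_cross (hcon x y)); rewrite inE ?connect0.
move=> a b eab; rewrite !inE => ha; apply: contraR => hab.
by apply: connect_trans ha (connect1 _); rewrite /del_edges eab.
Qed.

Section Cut.
Variables (S : {set T}) (F : {set {set T}}).
Hypothesis cut_in_F : forall x y, e x y -> x \in S -> y \notin S -> [set x; y] \in F.

Definition other_side x : {set T} := [set z | (z \in S) != (x \in S)].
Definition across x := nbhd e x :&: other_side x.
Definition inner x := nbhd e x :\: other_side x.

Lemma deg_across_inner x : deg e x = #|across x| + #|inner x|.
Proof. by rewrite /deg cardsID. Qed.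

Lemma across_sym x z : (z \in across x) = (x \in across z).
Proof. by rewrite !inE esym eq_sym. Qed.

Lemma across_of_inner x y z : y \in across x -> z \in inner x -> e z y -> y \in across z.
Proof.
rewrite !inE => /andP[_ yx] /andP[zx _] ezy; rewrite ezy /=.
by move: yx zx; case: (x \in S); case: (y \in S); case: (z \in S).
Qed.

Lemma across_edge_in_F x z : z \in across x -> [set x; z] \in F.
Proof.
rewrite !inE => /andP[exz]; case hx: (x \in S); case hz: (z \in S) => //= _.
  by apply: cut_in_F; rewrite ?hx ?hz.
by rewrite setUC; apply: cut_in_F; rewrite ?hx ?hz // esym.
Qed.

Definition crossing (A : {set T}) : {set T * T} :=
  [set p | (p.1 \in A) && (p.2 \in across p.1)].

Lemma card_crossing (A : {set T}) : #|crossing A| = \sum_(x in A) #|across x|.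
Proof.
rewrite -sum1_card (eq_bigl (fun p : T * T => (p.1 \in A) && (p.2 \in across p.1)));
  last by move=> p; rewrite inE.
rewrite -(pair_big_dep (fun x => x \in A) (fun x z => z \in across x) (fun _ _ => 1)).
by apply: eq_bigr => x _; rewrite sum1_card.
Qed.

Lemma card_crossing_le (A : {set T}) (b : bool) :
  {in A, forall x, (x \in S) = b} -> #|crossing A| <= #|F|.
Proof.
move=> hA; pose X := [set z | (z \in S) == b].
have sides p : p \in crossing A -> p.1 \in X /\ p.2 \notin X.
  by rewrite !inE => /andP[/hA hb /andP[_]]; rewrite hb => ne; split.
have inj : {in crossing A &, injective (fun p : T * T => [set p.1; p.2])}.
  move=> [x z] [x' z'] /sides [hx hz] /sides [hx' hz'].
  by case/(set2_inj_sep hx hx' hz hz') => /= -> ->.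
rewrite -(card_in_imset inj); apply/subset_leq_card/subsetP => _ /imsetP [p hp ->].
by move: hp; rewrite inE => /andP[_ /across_edge_in_F].
Qed.

Hypothesis dirac : locally_dirac e.

Section Vertex.
Variable u : T.

Lemma inner_nbr_across x :
  #|inner u| <= #|across u| -> x \in inner u -> exists2 y, y \in across u & e x y.
Proof.
move=> small hx.
have [/exists_inP //|/exists_inPn none] := boolP [exists y in across u, e x y].
have hxN : x \in nbhd e u by move: hx; rewrite inE => /andP[].
have sub : nbhd e x :&: nbhd e u \subset inner u :\ x.
  apply/subsetP => z; rewrite in_setI => /andP[exz hzN].
  rewrite in_setD1 in_setD hzN andbT; apply/andP; split.
    by apply: contraTneq exz => ->; rewrite inE eirr.
  by apply: contraL exz => zo; rewrite inE; apply: none; rewrite in_setI hzN.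
have := subset_leq_card sub; have := cardsD1 x (inner u); rewrite hx add1n.
have := dirac hxN; rewrite deg_across_inner; lia.
Qed.

Lemma across_nbr_bound y :
  y \in across u -> #|inner u| + 4 <= 2 * #|across y| + #|across u|.
Proof.
move=> hy; have hyN : y \in nbhd e u by move: hy; rewrite in_setI => /andP[].
set K := nbhd e y :&: inner u.
have s1 : nbhd e y :&: nbhd e u \subset K :|: (across u :\ y).
  apply/subsetP => z; rewrite in_setI => /andP[eyz hzN].
  rewrite in_setU in_setI eyz in_setD1 in_setI in_setD hzN !andbT /=.
  case: (z \in other_side u); rewrite ?orbT //= andbT.
  by apply: contraTneq eyz => ->; rewrite inE eirr.
have s2 : u |: K \subset across y.
  apply/subsetP => z; rewrite in_setU1 => /orP[/eqP ->|]; first by rewrite across_sym.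
  by rewrite in_setI inE => /andP[eyz hz]; rewrite across_sym (across_of_inner hy hz) // esym.
have uK : u \notin K by rewrite !inE eirr !andbF.
have c1 := subset_leq_card s1.
have c2 := subset_leq_card s2; rewrite cardsU1 uK in c2.
have [c3 _] := leq_card_setU K (across u :\ y).
have c4 := cardsD1 y (across u); rewrite hy in c4.
have := dirac hyN; rewrite deg_across_inner; lia.
Qed.

Lemma deg_le_cut_of_small_inner : #|inner u| <= #|across u| -> deg e u <= #|F|.
Proof.
move=> small.
pose f x := odflt u [pick y in across u | e x y].
have hf x : x \in inner u -> f x \in across u /\ e x (f x).
  case/(inner_nbr_across small) => y hy exy; rewrite /f.
  by case: pickP => [z /andP[]|/(_ y)] //; rewrite hy exy.
pose g z := if z \in across u then (u, z) else (z, f z).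
have inner_of x : x \in nbhd e u -> x \notin across u -> x \in inner u.
  by rewrite !inE => -> ->.
have g_inj : {in nbhd e u &, injective g}.
  move=> z z' hz hz'; rewrite /g.
  case: ifP => _; case: ifP => _ [] //.
  - by move=> uz' _; move: hz'; rewrite -uz' inE eirr.
  - by move=> zu; move: hz; rewrite zu inE eirr.
pose side_u := [set x | (x \in S) == (u \in S)].
have g_cross z : z \in nbhd e u -> g z \in crossing side_u.
  move=> hz; rewrite /g inE; case: ifP => [-> /=|/negbT hzA /=]; first by rewrite inE eqxx.
  have hzI := inner_of z hz hzA.
  have [hfA ezf] := hf z hzI.
  rewrite (across_of_inner hfA hzI ezf) andbT inE.
  by move: hzI; rewrite !inE negbK => /andP[].
rewrite /deg -(card_in_imset g_inj).
apply: leq_trans (card_crossing_le (A := side_u) (b := u \in S) _); last first.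
  by move=> x; rewrite inE => /eqP.
by apply/subset_leq_card/subsetP => _ /imsetP [z hz ->]; apply: g_cross.
Qed.

Lemma deg_le_cut_of_max_across :
  (forall x, #|across x| <= #|across u|) -> 0 < #|across u| ->
  #|across u| < #|inner u| -> deg e u <= #|F|.
Proof.
move=> umax pos big.
have sum_bound : #|across u| * (#|inner u| + 4) <=
    2 * \sum_(y in across u) #|across y| + #|across u| * #|across u|.
  have := @leq_sum _ (index_enum T) (fun y => y \in across u) (fun=> #|inner u| + 4)
    (fun y => 2 * #|across y| + #|across u|) across_nbr_bound.
  by rewrite sum_nat_const big_split /= -big_distrr sum_nat_const.
have sum_le : \sum_(y in across u) #|across y| <= #|across u| * #|across u|.
  by rewrite -sum_nat_const; apply: leq_sum => y _.
have sum_F : \sum_(y in across u) #|across y| <= #|F|.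
  rewrite -card_crossing; apply: (card_crossing_le (b := ~~ (u \in S))) => y.
  by rewrite !inE => /andP[_]; case: (y \in S); case: (u \in S).
rewrite deg_across_inner.
exact: leq_trans (leq_add_of_sum_bound pos big sum_bound sum_le) sum_F.
Qed.
End Vertex.

Lemma cut_deg_le :
  (exists x y, [&& e x y, x \in S & y \notin S]) -> exists u, deg e u <= #|F|.
Proof.
case=> x0 [y0 /and3P[exy hx hy]].
pose u := [arg max_(v > x0) #|across v|].
have umax x : #|across x| <= #|across u| by rewrite /u; case: arg_maxnP => // v _; apply.
exists u; have [small|big] := leqP #|inner u| #|across u|.
  exact: deg_le_cut_of_small_inner.
apply: deg_le_cut_of_max_across => //.
apply: leq_trans (umax x0); rewrite card_gt0; apply/set0Pn; exists y0.
by rewrite !inE exy hx (negbTE hy).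
Qed.
End Cut.
End Graph.

Theorem mainTheorem10 (T : finType) (e : rel T)
  (esym : symmetric e) (eirr : irreflexive e) :
  connected_graph e -> locally_dirac e -> 3 <= #|T| ->
  edge_conn e = min_deg e.
Proof.
move=> hcon dirac hT.
have [v0 hv0] := min_deg_attained e (ltnW (ltnW hT)).
apply/eqP; rewrite eqn_leq hv0 edge_conn_le_deg ?(ltnW hT) //=.
apply: leq_edge_conn.
  by rewrite -card_star //; apply/subset_leq_card/star_sub_edges.
move=> F /(disconnecting_cut hcon) [S [crossing_edge cut_in_F]].
have [u hu] := cut_deg_le esym eirr cut_in_F dirac crossing_edge.
by rewrite -hv0; apply: leq_trans (min_deg_le e u) hu.
Qed.
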